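(* Consider the excludable public good problem, and let $\mathcal A$ be the VCG-based mechanism with a normalized, monotone, symmetric function $H:2^N\to\mathbb{R}_{\ge0}$. Suppose that $\mathcal A$ always covers the incurred cost and is a $\rho$-approximation to the social cost for some finite $\rho$. Then for every nonempty $S\subseteq N$ and every $i\in S$, $H(S)-H(S\setminus\{i\})\ge\frac1{|S|}$.
   Context: Excludable public good problem: players $N=\{1,\dots,n\}$, each player $i$ has a private value $v_i\ge0$ for being served; an outcome is a set $S\subseteq N$ of served players; the cost is $C(S)=1$ for $S\ne\emptyset$ and $C(\emptyset)=0$. $H$ is normalized if $H(\emptyset)=0$, monotone if $S\subseteq T\Rightarrow H(S)\le H(T)$, symmetric if $H(S)=H(T)$ whenever $|S|=|T|$. The VCG-based mechanism with $H$ outputs $ALG\in\arg\max_{S\subseteq N}\sum_{i\in S}v_i-H(S)$ (some tie-breaking), for each $i$ computes $ALG^{-i}\in\arg\max_{S\subseteq N\setminus\{i\}}\sum_{j\in S}v_j-H(S)$, and charges $p_i=\left[\sum_{j\in ALG^{-i}}v_j-H(ALG^{-i})\right]-\left[\sum_{j\in ALG\setminus\{i\}}v_j-H(ALG)\right]$. It always covers the cost if $\sum_ip_i\ge C(ALG)$ for every profile. Social cost: $\pi(S)=C(S)+\sum_{i\notin S}v_i$; a $\rho$-approximation means $\pi(ALG)\le\rho\min_T\pi(T)$ on every profile. *)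

From HB Require Import structures.
From mathcomp Require Import all_boot all_order all_algebra.
Set Implicit Arguments. Unset Strict Implicit. Unset Printing Implicit Defensive.
Import Order.TTheory GRing.Theory Num.Theory.
Local Open Scope ring_scope.

Section Defs.
Variables (R : realFieldType) (n : nat).
Implicit Types (H : {set 'I_n} -> R) (v : 'I_n -> R) (S T : {set 'I_n}).

Definition cost S : R := if S == set0 then 0 else 1.

Definition H_normalized H := H set0 = 0.
Definition H_monotone H := forall S T, S \subset T -> H S <= H T.
Definition H_symmetric H := forall S T, #|S| = #|T| -> H S = H T.
Definition H_nonneg H := forall S, 0 <= H S.

Definition welfare H v S : R := \sum_(j in S) v j - H S.

Definition is_argmax H v (A : {set 'I_n}) := forall S, welfare H v S <= welfare H v A.

Definition is_argmax_minus H v (i : 'I_n) (A : {set 'I_n}) :=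
  i \notin A /\ forall S, i \notin S -> welfare H v S <= welfare H v A.

Definition vcg_payment H v (ALG ALGmi : {set 'I_n}) (i : 'I_n) : R :=
  (\sum_(j in ALGmi) v j - H ALGmi) - (\sum_(j in ALG :\ i) v j - H ALG).

Definition social_cost v S : R := cost S + \sum_(j in ~: S) v j.

Definition opt_social_cost v : R :=
  \big[Num.min/social_cost v set0]_(T : {set 'I_n}) social_cost v T.

Definition profile v := forall i, 0 <= v i.
End Defs.
Arguments cost {R n} S.
Arguments social_cost {R n} v S.
Arguments opt_social_cost {R n} v.

From HB Require Import structures.
From mathcomp Require Import all_boot all_order all_algebra.
From mathcomp Require Import lra.
Set Implicit Arguments. Unset Strict Implicit. Unset Printing Implicit Defensive.
Import Order.TTheory GRing.Theory Num.Theory.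
Local Open Scope ring_scope.

(* Let every player of S value service at M = H(S) + 1 and everyone else at 0.
   Then serving S beats serving nobody, so ALG is nonempty and the payments must
   sum to at least 1.  Outside S a player pays at most 0; a player j of S pays at
   most welfare(S \ j) - welfare(S) + M = H(S) - H(S \ j), because no set avoiding
   j does better than S \ j.  By symmetry all these marginals equal
   H(S) - H(S \ i), so |S| (H(S) - H(S \ i)) >= 1. *)

Section VCG.
Variables (R : realFieldType) (n : nat) (H : {set 'I_n} -> R).
Implicit Types (v : 'I_n -> R) (S T W : {set 'I_n}).

Definition indicator_valuation (M : R) S : 'I_n -> R :=
  fun x => if x \in S then M else 0.

Lemma indicator_valuation_ge0 M S : 0 <= M -> profile (indicator_valuation M S).
Proof. by move=> M0 x; rewrite /indicator_valuation; case: ifP. Qed.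

Lemma sum_indicator_valuation M S T :
  \sum_(x in T) indicator_valuation M S x = M * #|T :&: S|%:R.
Proof.
rewrite mulr_natr -sumr_const -big_mkcondr /=.
by apply: eq_bigl => x; rewrite inE.
Qed.

Lemma welfare_setD1 v S j : j \in S ->
  welfare H v S = welfare H v (S :\ j) + v j - (H S - H (S :\ j)).
Proof. by move=> jS; rewrite /welfare (big_setD1 j jS) /=; lra. Qed.

Lemma vcg_payment_le v A B j : 0 <= v j ->
  vcg_payment H v A B j <= welfare H v B - welfare H v A + v j.
Proof.
move=> vj0; rewrite /vcg_payment /welfare.
suff : \sum_(x in A) v x - v j <= \sum_(x in A :\ j) v x by lra.
have [jA | jNA] := boolP (j \in A).
  by rewrite (big_setD1 j jA) addrC addKr.
by rewrite (setDidPl _) ?gerBl // disjoint_sym disjoints1.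
Qed.

Lemma symmetric_setD1 S i j : H_symmetric H -> i \in S -> j \in S ->
  H (S :\ i) = H (S :\ j).
Proof.
move=> Hsym iS jS; apply: Hsym.
by have := cardsD1 i S; have := cardsD1 j S; rewrite iS jS => -> /addnI ->.
Qed.

(* With M >= H W, the indicator valuation of S prefers W to any set that meets S
   only inside W: each missing player of S costs M in value and saves at most H W. *)
Lemma welfare_indicator_le M S T W :
  H_nonneg H -> H_monotone H -> H W <= M -> W \subset S -> T :&: S \subset W ->
  welfare H (indicator_valuation M S) T <= welfare H (indicator_valuation M S) W.
Proof.
move=> Hnn Hmon HWM sWS sTW.
rewrite /welfare !sum_indicator_valuation (setIidPl sWS).
have HTS : H (T :&: S) <= H T by apply/Hmon/subsetIl.
have [eTW | neTW] := eqVneq (T :&: S) W; first by rewrite eTW in HTS *; lra.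
have : (#|T :&: S| + 1)%:R <= #|W|%:R :> R.
  by rewrite ler_nat addn1 proper_card // properEneq neTW.
rewrite natrD => le_card.
have := ler_wpM2l (le_trans (Hnn W) HWM) le_card.
have := Hnn (T :&: S); lra.
Qed.

Lemma vcg_payment_indicator_le M S A B j :
  H_nonneg H -> H_monotone H -> H S <= M ->
  is_argmax H (indicator_valuation M S) A ->
  is_argmax_minus H (indicator_valuation M S) j B ->
  vcg_payment H (indicator_valuation M S) A B j <=
    if j \in S then H S - H (S :\ j) else 0.
Proof.
move=> Hnn Hmon HSM wA [jB wB]; set v := indicator_valuation M S.
have vj0 : 0 <= v j by apply: indicator_valuation_ge0 (le_trans (Hnn S) HSM) j.
apply: le_trans (vcg_payment_le A B vj0) _.
have wBA := wA B; rewrite /v /indicator_valuation; case: ifPn => jS; last by lra.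
have sBS : B :&: S \subset S :\ j.
  apply/subsetP => x; rewrite !inE => /andP[xB ->]; rewrite andbT.
  by apply: contraNneq jB => <-.
have HSj : H (S :\ j) <= M := le_trans (Hmon _ _ (subsetDl S [set j])) HSM.
have := welfare_indicator_le Hnn Hmon HSj (subsetDl _ _) sBS.
have := wA S; have := welfare_setD1 v jS; rewrite /v /indicator_valuation jS.
lra.
Qed.

End VCG.

Theorem claim5p2 (R : realFieldType) (n : nat) (H : {set 'I_n} -> R)
  (alg : ('I_n -> R) -> {set 'I_n})
  (algm : 'I_n -> ('I_n -> R) -> {set 'I_n}) (rho : R) :
  H_nonneg H -> H_normalized H -> H_monotone H -> H_symmetric H ->
  (forall v, profile v -> is_argmax H v (alg v)) ->
  (forall v i, profile v -> is_argmax_minus H v i (algm i v)) ->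
  (* always covers the cost *)
  (forall v, profile v ->
     cost (alg v) <= \sum_(i < n) vcg_payment H v (alg v) (algm i v) i) ->
  (* rho-approximation to the social cost *)
  (forall v, profile v ->
     social_cost v (alg v) <= rho * opt_social_cost v) ->
  forall S : {set 'I_n}, S != set0 ->
  forall i, i \in S -> H S - H (S :\ i) >= 1 / (#|S|%:R).
Proof.
move=> Hnn Hnorm Hmon Hsym Harg Hargm Hcov _ S _ i iS.
set M := H S + 1; set v := indicator_valuation M S; set A := alg v.
have HSM : H S <= M by rewrite /M lerDl.
have M0 : 0 <= M := le_trans (Hnn S) HSM.
have vp : profile v := indicator_valuation_ge0 S M0.
have S0 : (0 < #|S|)%N by rewrite card_gt0; apply/set0Pn; exists i.
have A0 : A != set0.
  apply: contraTneq (Harg v vp S); rewrite -/A => ->.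
  rewrite -ltNge /welfare big_set0 Hnorm sum_indicator_valuation setIid.
  have : 1 <= #|S|%:R :> R by rewrite ler1n.
  by move/(ler_wpM2l M0); rewrite mulr1 /M; lra.
set d := H S - H (S :\ i).
have pay j : vcg_payment H v A (algm j v) j <= if j \in S then d else 0.
  have := vcg_payment_indicator_le Hnn Hmon HSM (Harg v vp) (Hargm v j vp).
  by case: ifPn => // jS; rewrite /d (symmetric_setD1 Hsym iS jS).
have : 1 <= \sum_(j < n) (if j \in S then d else 0).
  apply: le_trans (ler_sum _ (fun j _ => pay j)).
  by move: (Hcov v vp); rewrite /cost -/A (negbTE A0).
rewrite -big_mkcond /= sumr_const => le1.
by rewrite ler_pdivrMr ?ltr0n // mulr_natr.
Qed.
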